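(* Fix $M\in\mathbb{R}$. For all $m\le M$, all probability distributions $\nu\in\mathcal{D}_{m,M}$ and all $\mu>\mathbb{E}(\nu)$, \[ \mathcal{K}_{\inf}(\nu,\mu,\mathcal{D}_{m,M})=\mathcal{K}_{\inf}(\nu,\mu,\mathcal{D}_{-\infty,M}). \]
   Context: $\mathcal{D}_{m,M}$ is the set of probability distributions on $\mathbb{R}$ supported on $[m,M]$; $\mathcal{D}_{-\infty,M}$ is the set of probability distributions with a first moment supported on $(-\infty,M]$. $\mathbb{E}(\nu)$ denotes the mean of $\nu$. For a distribution $\nu$, $x\in\mathbb{R}$ and a set of distributions $\mathcal{D}$, $\mathcal{K}_{\inf}(\nu,x,\mathcal{D})=\inf\{\mathrm{KL}(\nu,\nu'):\nu'\in\mathcal{D},\ \mathbb{E}(\nu')>x\}$, with the infimum of the empty set equal to $+\infty$; $\mathrm{KL}(\nu,\nu')=\int\ln(d\nu/d\nu')\,d\nu$ if $\nu\ll\nu'$ and $+\infty$ otherwise. *)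

From HB Require Import structures.
From mathcomp Require Import all_boot all_order all_algebra.
From mathcomp Require Import all_classical all_reals all_analysis.
Set Implicit Arguments. Unset Strict Implicit. Unset Printing Implicit Defensive.
Import Order.TTheory GRing.Theory Num.Theory.
Local Open Scope classical_set_scope.
Local Open Scope ring_scope.
Local Open Scope ereal_scope.

Definition is_density (R : realType) (nu nu' : probability R R) (f : R -> R) :=
  [/\ measurable_fun setT f, (forall x, (0 <= f x)%R) &
      forall A, measurable A -> nu A = \int[nu']_(x in A) (f x)%:E].

(* KL(nu, nu') = \int ln (dnu/dnu') dnu if nu << nu' (i.e. a density exists),
   and +oo otherwise (inf of the empty set).  All densities agree nu'-a.e.,
   so the set below is a singleton when nonempty. *)
Definition KL (R : realType) (nu nu' : probability R R) : \bar R :=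
  ereal_inf [set \int[nu]_x (ln (f x))%:E | f in is_density nu nu'].

Definition mean (R : realType) (nu : probability R R) : \bar R :=
  \int[nu]_x x%:E.

Definition D_mM (R : realType) (m M : R) : set (probability R R) :=
  [set nu | nu `[m, M]%classic = 1].

Definition D_infM (R : realType) (M : R) : set (probability R R) :=
  [set nu | nu `]-oo, M]%classic = 1 /\ nu.-integrable setT (fun x => x%:E)].

Definition Kinf (R : realType) (nu : probability R R) (x : R)
  (D : set (probability R R)) : \bar R :=
  ereal_inf [set KL nu nu' | nu' in [set nu' | D nu' /\ x%:E < mean nu']].

From HB Require Import structures.
From mathcomp Require Import all_boot all_order all_algebra.
From mathcomp Require Import all_classical all_reals all_analysis.
From mathcomp Require Import measurable_realfun lra.
Set Implicit Arguments. Unset Strict Implicit. Unset Printing Implicit Defensive.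
Import Order.TTheory GRing.Theory Num.Theory.
Local Open Scope classical_set_scope.
Local Open Scope ring_scope.
Local Open Scope ereal_scope.

(* Push an admissible nu' in D_{-oo,M} forward along x |-> max x m.  The image
   lies in D_{m,M}, its mean is at least that of nu', and it is no farther from
   nu in KL: if f = dnu/dnu', then f with its value at m replaced by
   nu{m} / nu'(]-oo, m]) is a density of nu with respect to the image, because
   nu gives no mass to ]-oo, m[ while the image collapses all of nu'(]-oo, m])
   onto the atom m.  This new value is at most f m, as nu{m} = f m * nu'{m},
   so the logarithm of the new density is below ln f, except on the nu-null
   set {m} when nu{m} = 0.  Hence the infimum defining K_inf over D_{m,M} is
   not larger; the converse inequality is the inclusion D_{m,M} <= D_{-oo,M}. *)

Definition lower_clamp (R : realType) (m x : R) : R := Num.max x m.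

Lemma measurable_lower_clamp (R : realType) (m : R) :
  measurable_fun setT (lower_clamp m).
Proof. exact: measurable_maxr. Qed.

HB.instance Definition _ (R : realType) (m : R) :=
  isMeasurableFun.Build _ _ R R (lower_clamp m) (@measurable_lower_clamp R m).

Lemma lower_clamp_ge (R : realType) (m x : R) :
  (m <= x)%R -> lower_clamp m x = x.
Proof. exact: max_l. Qed.

Lemma lower_clamp_le (R : realType) (m x : R) :
  (x <= m)%R -> lower_clamp m x = m.
Proof. exact: max_r. Qed.

Lemma probability_setC_eq0 d (T : measurableType d) (R : realType)
    (P : probability T R) (A : set T) :
  measurable A -> P A = 1 -> P (~` A) = 0.
Proof. by move=> mA PA; rewrite probability_setC // PA subee. Qed.

Lemma le_measurable_integral d (T : measurableType d) (R : realType)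
    (mu : {measure set T -> \bar R}) (D : set T) (f g : T -> \bar R) :
  measurable D -> measurable_fun D f -> measurable_fun D g ->
  {in D, forall x, f x <= g x} ->
  \int[mu]_(x in D) f x <= \int[mu]_(x in D) g x.
Proof.
move=> mD mf mg fg; rewrite integralE [leRHS]integralE; apply: leeB.
  apply: ge0_le_integral => //; try exact: measurable_funepos.
  by move=> x Dx; apply: (funepos_le fg); rewrite inE.
apply: ge0_le_integral => //; try exact: measurable_funeneg.
by move=> x Dx; apply: (funeneg_le fg); rewrite inE.
Qed.

Lemma integrable_id_supported (R : realType) (m M : R) (nu : probability R R) :
  nu `[m, M]%classic = 1 -> nu.-integrable setT EFin.
Proof.
move=> nu_mM; apply/integrableP; split; first exact/measurable_EFinP.
apply: (@le_lt_trans _ _ (\int[nu]_x (`|m| + `|M|)%:E)).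
  apply: ae_ge0_le_integral => //.
    by apply: measurableT_comp => //; exact/measurable_EFinP.
  exists (~` `[m, M]%classic); split.
  - exact: measurableC (measurable_itv _).
  - exact: probability_setC_eq0 (measurable_itv _) nu_mM.
  - move=> x /= not_bounded; rewrite in_itv /= => /andP[mx xM].
    apply: not_bounded => _; rewrite lee_fin.
    have := ler_norm m; have := ler_norm M; have := normr_ge0 M.
    have := ler_norm (- m); rewrite normrN ler_norml; lra.
rewrite integral_cst //; apply: lte_mul_pinfty => //.
by rewrite (le_lt_trans (probability_le1 _ _)) ?ltry.
Qed.

Lemma D_mM_subset_D_infM (R : realType) (m M : R) : D_mM m M `<=` D_infM M.
Proof.
move=> nu nu_mM; split; last exact: integrable_id_supported nu_mM.
apply/eqP; rewrite eq_le probability_le1 //= -nu_mM.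
apply: le_measure; rewrite ?inE; try exact: measurable_itv.
by move=> x; rewrite /= !in_itv /= => /andP[].
Qed.

Lemma distribution_lower_clamp_D_mM (R : realType) (m M : R)
    (nu' : probability R R) :
  (m <= M)%R -> D_infM M nu' -> D_mM m M (distribution nu' (lower_clamp m)).
Proof.
move=> mM [nu'_M _]; rewrite /D_mM /= /pushforward -nu'_M; congr (nu' _).
apply/seteqP; split => x; rewrite /= !in_itv /= /lower_clamp ge_max le_max lexx.
  by case/andP=> _ /andP[].
by move=> ->; rewrite mM orbT.
Qed.

Lemma mean_le_lower_clamp (R : realType) (m : R) (nu' : probability R R) :
  nu'.-integrable setT EFin ->
  mean nu' <= mean (distribution nu' (lower_clamp m)).
Proof.
move=> int_id.
have int_clamp : nu'.-integrable setT (EFin \o lower_clamp m).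
  apply: (@le_integrable _ _ _ nu' setT measurableT _
    ((fun x => `|x%:E|) \+ (EFin \o cst `|m|%R))).
  - exact/measurable_EFinP.
  - move=> x _ /=; rewrite lee_fin [in leRHS]ger0_norm ?addr_ge0 //.
    have := ler_norm x; have := ler_norm m.
    have := ler_norm (- x); have := ler_norm (- m); rewrite !normrN.
    rewrite /lower_clamp ler_norml !le_max !ge_max; lra.
  - apply: integrableD => //; first exact: integrable_abse.
    exact: finite_measure_integrable_cst.
rewrite /mean integral_distribution //.
by apply: le_integral => // x _; rewrite lee_fin le_max lexx.
Qed.

Lemma preimage_lower_clamp_mem (R : realType) (m : R) (A : set R) :
  A m -> lower_clamp m @^-1` A = A `&` `]m, +oo[%classic `|` `]-oo, m]%classic.
Proof.
move=> Am; apply/seteqP; split => x /=; rewrite !in_itv /= andbT.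
  by case: (ltP m x) => [/ltW/lower_clamp_ge ->|]; [left|right].
by case=> [[Ax /ltW/lower_clamp_ge ->]|/lower_clamp_le ->].
Qed.

Lemma preimage_lower_clamp_nmem (R : realType) (m : R) (A : set R) :
  ~ A m -> lower_clamp m @^-1` A = A `&` `]m, +oo[%classic.
Proof.
move=> nAm; apply/seteqP; split => x /=; rewrite in_itv /= andbT.
  by case: (ltP m x) => [/ltW/lower_clamp_ge -> //|/lower_clamp_le -> //].
by case=> Ax /ltW/lower_clamp_ge ->.
Qed.

Lemma density_mass_set1 (R : realType) (nu nu' : probability R R) (f : R -> R)
    (a : R) :
  is_density nu nu' f -> nu [set a] = (f a)%:E * nu' [set a].
Proof.
case=> _ _ f_density; rewrite f_density // -integral_cst //.
by apply: eq_integral => x; rewrite inE => ->.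
Qed.

(* When nu'(]-oo, m]) = 0 the value at m is 0 (division by 0), and then also
   nu{m} = 0, see [lower_clamp_density_mass]. *)
Definition lower_clamp_density (R : realType) (m : R) (nu nu' : probability R R)
    (f : R -> R) (x : R) : R :=
  if x == m then (fine (nu [set m]) / fine (nu' `]-oo, m]%classic))%R else f x.

Section lower_clamp_density.
Variables (R : realType) (m : R) (nu nu' : probability R R) (f : R -> R).
Hypotheses (nu_lt0 : nu `]-oo, m[%classic = 0) (f_density : is_density nu nu' f).

Local Notation g := (lower_clamp_density m nu nu' f).

Lemma lower_clamp_density_mass : (g m)%:E * nu' `]-oo, m]%classic = nu [set m].
Proof.
rewrite /lower_clamp_density eqxx.
set p := fine (nu' _); have p_def : nu' `]-oo, m]%classic = p%:E.
  by rewrite fineK ?fin_num_measure.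
rewrite p_def -EFinM; have [p0|p0] := eqVneq p 0%R.
  rewrite p0 mulr0 (density_mass_set1 _ f_density).
  suff -> : nu' [set m] = 0 by rewrite mule0.
  apply: subset_measure0 (_ : [set m] `<=` `]-oo, m]) _ => //.
  - by move=> x ->; rewrite /= in_itv /= lexx.
  - by rewrite p0 in p_def.
by rewrite divfK // fineK ?fin_num_measure.
Qed.

Lemma nu_split_gt_set1 (A : set R) : measurable A ->
  nu A = nu (A `&` `]m, +oo[%classic) + nu (A `&` [set m]).
Proof.
move=> mA; have mAgt : measurable (A `&` `]m, +oo[%classic).
  by apply: measurableI => //; exact: measurable_itv.
have mAm : measurable (A `&` [set m]) by apply: measurableI.
have mAlt : measurable (A `&` `]-oo, m[%classic).
  by apply: measurableI => //; exact: measurable_itv.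
have A_split : A = A `&` `]m, +oo[%classic `|` A `&` [set m]
                  `|` A `&` `]-oo, m[%classic.
  apply/seteqP; split=> [x Ax|x]; last by case=> [[[]|[]]|[]].
  rewrite /= !in_itv /= andbT.
  by case: ltgtP => [_|_|->]; [left; left|right|left; right].
rewrite {1}A_split measureU0 ?measureU //; try exact: measurableU.
- apply/seteqP; split => // x [[_]]; rewrite /= in_itv /= andbT => mx [_ xm].
  by move: mx; rewrite xm ltxx.
- by apply: subset_measure0 nu_lt0 => // x [].
Qed.

Lemma measurable_lower_clamp_density : measurable_fun setT g.
Proof.
case: f_density => mf _ _.
by apply: measurable_fun_ifT => //; exact: measurable_fun_eqr.
Qed.

Lemma lower_clamp_density_ge0 x : (0 <= g x)%R.
Proof.
case: f_density => _ f0 _; rewrite /lower_clamp_density.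
by case: ifP => // _; rewrite divr_ge0 ?fine_ge0.
Qed.

Lemma integral_lower_clamp_density_gt (A : set R) : measurable A ->
  \int[nu']_(x in A `&` `]m, +oo[%classic) (g (lower_clamp m x))%:E =
  nu (A `&` `]m, +oo[%classic).
Proof.
case: f_density => _ _ f_nu mA.
rewrite f_nu; last by apply: measurableI => //; exact: measurable_itv.
apply: eq_integral => x; rewrite inE /= in_itv /= andbT => -[_ mx].
by rewrite lower_clamp_ge ?ltW // /lower_clamp_density gt_eqF.
Qed.

Lemma lower_clamp_density_is_density :
  is_density nu (distribution nu' (lower_clamp m)) g.
Proof.
split=> [|x|A mA]; [exact: measurable_lower_clamp_density|
                    exact: lower_clamp_density_ge0|].
have mAgt : measurable (A `&` `]m, +oo[%classic).
  by apply: measurableI => //; exact: measurable_itv.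
have mg : measurable_fun setT (EFin \o g).
  by apply/measurable_EFinP; exact: measurable_lower_clamp_density.
rewrite /distribution ge0_integral_pushforward //; first last.
- by move=> x _; rewrite lee_fin lower_clamp_density_ge0.
- exact: measurable_funTS.
rewrite nu_split_gt_set1 //; have [Am|nAm] := pselect (A m).
  rewrite preimage_lower_clamp_mem // ge0_integral_setU //; first last.
  - apply/disj_setPS => x [[_]]; rewrite /= !in_itv /= andbT => mx xm.
    by move: (lt_le_trans mx xm); rewrite ltxx.
  - by move=> x _; rewrite lee_fin lower_clamp_density_ge0.
  - by apply/measurable_funTS/measurableT_comp => //;
      exact: measurable_lower_clamp.
  rewrite integral_lower_clamp_density_gt //; congr (_ + _).
  rewrite setI1 mem_set //.
  rewrite -lower_clamp_density_mass -integral_cst; last exact: measurable_itv.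
  apply: eq_integral => x; rewrite inE /= in_itv /= => xm.
  by rewrite lower_clamp_le.
rewrite preimage_lower_clamp_nmem // integral_lower_clamp_density_gt //.
by rewrite setI1 memNset // measure0 adde0.
Qed.

Lemma integral_ln_lower_clamp_density_le :
  \int[nu]_x (ln (g x))%:E <= \int[nu]_x (ln (f x))%:E.
Proof.
have [mf f0 _] := f_density.
have mlng : measurable_fun setT (fun x => (ln (g x))%:E).
  apply/measurable_EFinP/measurableT_comp => //.
  exact: measurable_lower_clamp_density.
have mlnf : measurable_fun setT (fun x => (ln (f x))%:E).
  by apply/measurable_EFinP/measurableT_comp.
have [nu_m0|nu_m_neq0] := eqVneq (nu [set m]) 0.
  rewrite le_eqVlt (ae_eq_integral (fun x => (ln (f x))%:E)) ?eqxx //.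
  exists [set m]; split => // x /= ne_fg.
  apply/eqP/negPn/negP => xm; apply: ne_fg.
  by rewrite /lower_clamp_density (negbTE xm).
apply: le_measurable_integral => // x _; rewrite lee_fin.
rewrite /lower_clamp_density; case: eqP => [->|//].
set s := fine (nu' [set m]); set p := fine (nu' `]-oo, m]%classic).
have nu_m : fine (nu [set m]) = (f m * s)%R.
  by rewrite (density_mass_set1 _ f_density) fineM ?fin_num_measure.
have fs_gt0 : (0 < f m * s)%R.
  rewrite -nu_m lt_def fine_ge0 // andbT.
  apply: contra nu_m_neq0 => /eqP nu_m0.
  by rewrite -[nu _]fineK ?fin_num_measure // nu_m0.
have s_le_p : (s <= p)%R.
  rewrite -lee_fin /s /p !fineK ?fin_num_measure //.
  apply: le_measure; rewrite ?inE; [exact: measurable_set1|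
                                     exact: measurable_itv|].
  by move=> y ->; rewrite /= in_itv /= lexx.
have s_ge0 : (0 <= s)%R by rewrite fine_ge0.
have s_gt0 : (0 < s)%R.
  rewrite lt_def s_ge0 andbT.
  by apply: contraTneq fs_gt0 => ->; rewrite mulr0 ltxx.
have p_gt0 : (0 < p)%R := lt_le_trans s_gt0 s_le_p.
have fm_gt0 : (0 < f m)%R.
  rewrite lt_def f0 andbT.
  by apply: contraTneq fs_gt0 => ->; rewrite mul0r ltxx.
by rewrite nu_m ler_ln ?posrE ?divr_gt0 // ler_pdivrMr // ler_wpM2l // ltW.
Qed.

End lower_clamp_density.

Lemma KL_lower_clamp_le (R : realType) (m : R) (nu nu' : probability R R) :
  nu `]-oo, m[%classic = 0 ->
  KL nu (distribution nu' (lower_clamp m)) <= KL nu nu'.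
Proof.
move=> nu_lt0; apply: le_ereal_inf_tmp => _ [f f_density <-].
apply: le_trans (integral_ln_lower_clamp_density_le m f_density).
apply: ereal_inf_lbound; exists (lower_clamp_density m nu nu' f) => //.
exact: lower_clamp_density_is_density.
Qed.

Lemma D_mM_lt_eq0 (R : realType) (m M : R) (nu : probability R R) :
  D_mM m M nu -> nu `]-oo, m[%classic = 0.
Proof.
have m_mM : measurable `[m, M]%classic by exact: measurable_itv.
move=> nu_mM; apply: subset_measure0 (probability_setC_eq0 m_mM nu_mM).
- exact: measurable_itv.
- exact: measurableC.
- by move=> x; rewrite /= !in_itv /= => xm /andP[/(lt_le_trans xm)]; rewrite ltxx.
Qed.

Theorem proposition1 (R : realType) (M : R) :
  forall (m : R), (m <= M)%R ->
  forall (nu : probability R R), D_mM m M nu ->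
  forall (mu : R), mean nu < mu%:E ->
  Kinf nu mu (D_mM m M) = Kinf nu mu (D_infM M).
Proof.
move=> m mM nu nu_mM mu _.
apply/eqP; rewrite eq_le; apply/andP; split.
- apply: le_ereal_inf_tmp => _ [nu' [nu'_M mu_lt] <-].
  apply: le_trans (KL_lower_clamp_le nu' (D_mM_lt_eq0 nu_mM)).
  apply: ereal_inf_lbound; exists (distribution nu' (lower_clamp m)) => //.
  split; first exact: distribution_lower_clamp_D_mM.
  exact: lt_le_trans mu_lt (mean_le_lower_clamp _ nu'_M.2).
- apply: ereal_inf_le_tmp => _ [nu' [nu'_mM mu_lt] <-]; exists nu' => //.
  by split => //; exact: (D_mM_subset_D_infM nu'_mM).
Qed.
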